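(* Let $I$ be a set of integers and let $(a_{ij})_{i,j\in I}$ be a family of integers. Then there exist integers $(x_i)_{i\in I}$ such that $$x_j-x_i\equiv a_{ij}\pmod{(i,j)}\quad\text{for all } i,j\in I$$ if and only if $$a_{ij}+a_{jk}\equiv a_{ik}\pmod{(i,j,k)}\quad\text{for all } i,j,k\in I.$$
   Context: For integers $i_0,\dots,i_m$, the notation $(i_0,\dots,i_m)$ denotes the ideal of $\mathbb{Z}$ generated by $i_0,\dots,i_m$, i.e. $\gcd(i_0,\dots,i_m)\mathbb{Z}$. A congruence modulo an ideal $J$ means that the difference lies in $J$; in particular, a congruence modulo the zero ideal is an equality. *)

From mathcomp Require Import all_boot all_order all_algebra.
Set Implicit Arguments. Unset Strict Implicit. Unset Printing Implicit Defensive.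
Import Order.TTheory GRing.Theory Num.Theory.
Local Open Scope ring_scope.

(* congruence modulo the ideal (i_0,...,i_m) = gcd(i_0,...,i_m) Z.
   Note (m = n %[mod 0])%Z is equality, matching "mod the zero ideal". *)
Definition cong_ideal2 (i j : int) (u v : int) : Prop :=
  (u = v %[mod gcdz i j])%Z.
Definition cong_ideal3 (i j k : int) (u v : int) : Prop :=
  (u = v %[mod gcdz (gcdz i j) k])%Z.

From mathcomp Require Import all_boot all_order all_algebra.
From mathcomp Require Import ring.
From Stdlib Require Import ClassicalEpsilon.
Set Implicit Arguments. Unset Strict Implicit. Unset Printing Implicit Defensive.
Import Order.TTheory GRing.Theory Num.Theory.
Local Open Scope ring_scope.

(* For sufficiency, enumerate I and choose
   x_n by induction: the congruences x_n = x_l + a_ln (mod (l, n)), l < n, are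
   pairwise compatible thanks to the cocycle condition and the congruences
   already satisfied by the x_l, so the Chinese remainder theorem for
   non-coprime moduli solves them simultaneously. *)

Lemma dvdn_biglcm (T : eqType) (s : seq T) (F : T -> nat) x :
  x \in s -> (F x %| \big[lcmn/1%N]_(y <- s) F y)%N.
Proof. by move=> xs; rewrite (big_rem x xs) dvdn_lcml. Qed.

Lemma gcdn_biglcm_dvd (T : eqType) (s : seq T) (F : T -> nat) w z :
  (forall x, x \in s -> gcdn (F x) w %| z)%N ->
  (gcdn (\big[lcmn/1%N]_(x <- s) F x) w %| z)%N.
Proof.
move=> dvd_z; rewrite big_seq.
apply: (big_ind (fun L => gcdn L w %| z)%N) => [|a b da db|]; last exact: dvd_z.
  by rewrite gcd1n dvd1n.
(* gcd distributes over lcm *)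
by rewrite Order.NatDvd.meetUl dvdn_lcm da db.
Qed.

Lemma chinese_remainder_seq (s : seq (int * int)) :
  {in s &, forall p q, (gcdz p.1 q.1 %| p.2 - q.2)%Z} ->
  exists y, forall p, p \in s -> (p.1 %| y - p.2)%Z.
Proof.
elim: s => [|q s IHs] compat; first by exists 0.
have sub_s : {subset s <= q :: s} by move=> p ps; rewrite inE ps orbT.
have /IHs[y solves_s] : {in s &, forall p p', (gcdz p.1 p'.1 %| p.2 - p'.2)%Z}.
  by move=> p p' /sub_s ps /sub_s p's; apply: compat.
pose L := \big[lcmn/1%N]_(p <- s) `|p.1|%N.
have dvd_L p : p \in s -> (p.1 %| L%:Z)%Z.
  by move=> ps; rewrite dvdzE absz_nat (dvdn_biglcm (fun p => `|p.1|%N)).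
have /dvdzP[k def_y] : (gcdz L%:Z q.1 %| y - q.2)%Z.
  rewrite dvdzE /gcdz absz_nat; apply: gcdn_biglcm_dvd => p ps.
  suff: (gcdz p.1 q.1 %| y - q.2)%Z by rewrite dvdzE /gcdz absz_nat.
  have -> : y - q.2 = (y - p.2) + (p.2 - q.2) by ring.
  apply: rpredD; first exact: dvdz_trans (dvdz_gcdl _ _) (solves_s p ps).
  exact: compat (sub_s _ ps) (mem_head _ _).
have [u [v bezout]] := Bezoutz L%:Z q.1.
exists (y - k * u * L%:Z) => p; rewrite inE => /predU1P[-> | ps].
  have -> : y - k * u * L%:Z - q.2 = k * v * q.1.
    by rewrite -[y](subrK q.2) def_y -bezout; ring.
  exact: dvdz_mull (dvdzz _).
have -> : y - k * u * L%:Z - p.2 = (y - p.2) - k * u * L%:Z by ring.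
by rewrite rpredB ?solves_s ?dvdz_mull ?dvd_L.
Qed.

Lemma gcdz3_dvd i j k :
  let g := gcdz (gcdz i j) k in [/\ (g %| i)%Z, (g %| j)%Z & (g %| k)%Z].
Proof.
split; last exact: dvdz_gcdr.
  exact: dvdz_trans (dvdz_gcdl _ _) (dvdz_gcdl _ _).
exact: dvdz_trans (dvdz_gcdl _ _) (dvdz_gcdr _ _).
Qed.

Lemma coboundary_cocycle (T : Type) (c x : T -> int) (b : T -> T -> int) i j k :
  (gcdz (c i) (c j) %| x j - x i - b i j)%Z ->
  (gcdz (c j) (c k) %| x k - x j - b j k)%Z ->
  (gcdz (c i) (c k) %| x k - x i - b i k)%Z ->
  (gcdz (gcdz (c i) (c j)) (c k) %| b i j + b j k - b i k)%Z.
Proof.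
have [gi gj gk] := gcdz3_dvd (c i) (c j) (c k).
move=> dij djk dik.
have -> : b i j + b j k - b i k =
  (x k - x i - b i k) - (x j - x i - b i j) - (x k - x j - b j k) by ring.
apply: rpredB; first apply: rpredB.
- by apply: dvdz_trans dik; rewrite dvdz_gcd gi gk.
- by apply: dvdz_trans dij; rewrite dvdz_gcd gi gj.
- by apply: dvdz_trans djk; rewrite dvdz_gcd gj gk.
Qed.

Section CocycleSolution.

Variables (P : pred nat) (c : nat -> int) (b : nat -> nat -> int).
Hypothesis b_cocycle : forall i j k, P i -> P j -> P k ->
  (gcdz (gcdz (c i) (c j)) (c k) %| b i j + b j k - b i k)%Z.

Lemma cocycle_diag n : P n -> (c n %| b n n)%Z.
Proof.
move=> Pn; have := b_cocycle Pn Pn Pn; rewrite addrK => /(dvdz_trans _); apply.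
by rewrite !dvdz_gcd dvdzz.
Qed.

Lemma cocycle_antisym m n : P m -> P n -> (gcdz (c m) (c n) %| b m n + b n m)%Z.
Proof.
move=> Pm Pn; rewrite -[_ + _](subrK (b m m)) rpredD //.
  by apply: dvdz_trans (b_cocycle Pm Pn Pm); rewrite dvdz_gcd dvdzz dvdz_gcdl.
exact: dvdz_trans (dvdz_gcdl _ _) (cocycle_diag Pm).
Qed.

Definition extends_at n (x : nat -> int) (y : int) :=
  forall l, (l < n)%N -> P l -> P n -> (gcdz (c l) (c n) %| y - x l - b l n)%Z.

Lemma exists_extends_at n (x : nat -> int) :
  (forall m, (m < n)%N -> extends_at m x (x m)) -> exists y, extends_at n x y.
Proof.
move=> x_ext; case Pn: (P n); last by exists 0 => l _ _; rewrite Pn.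
pose s := [seq (gcdz (c l) (c n), x l + b l n) | l <- [seq l <- iota 0 n | P l]].
have mem_s l : (l < n)%N -> P l -> (gcdz (c l) (c n), x l + b l n) \in s.
  by move=> ln Pl; apply: map_f; rewrite mem_filter mem_iota Pl ln.
have compat l m : (l < m < n)%N -> P l -> P m ->
    (gcdz (gcdz (c l) (c n)) (gcdz (c m) (c n)) %| (x m + b m n) - (x l + b l n))%Z.
  case/andP=> lm mn Pl Pm; set g := gcdz _ _.
  have [gl gm gn] : [/\ (g %| c l)%Z, (g %| c m)%Z & (g %| c n)%Z].
    by split; [apply: dvdz_trans (dvdz_gcdl _ _) (dvdz_gcdl _ _)
      | apply: dvdz_trans (dvdz_gcdr _ _) (dvdz_gcdl _ _)
      | apply: dvdz_trans (dvdz_gcdl _ _) (dvdz_gcdr _ _)].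
  have -> : x m + b m n - (x l + b l n) =
    (x m - x l - b l m) + (b l m + b m n - b l n) by ring.
  rewrite rpredD //.
    by apply: dvdz_trans (x_ext m mn l lm Pl Pm); rewrite dvdz_gcd gl gm.
  by apply: dvdz_trans (b_cocycle Pl Pm Pn); rewrite !dvdz_gcd gl gm gn.
have [|y y_sol] := @chinese_remainder_seq s.
  move=> _ _ /mapP[l + ->] /mapP[m + ->]; rewrite !mem_filter !mem_iota /=.
  case/andP=> Pl ln /andP[Pm mn].
  case: (ltngtP l m) => [lm | ml | <-]; last by rewrite subrr dvdz0.
    by rewrite -opprB rpredN compat ?lm.
  by rewrite gcdzC compat ?ml.
by exists y => l ln Pl _; have := y_sol _ (mem_s l ln Pl); rewrite opprD addrA.
Qed.

(* [approx n] holds the values chosen at the indices [m < n]. *)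
Fixpoint approx n : nat -> int :=
  if n is n'.+1 then fun m =>
    if m == n' then epsilon (inhabits 0) (extends_at n' (approx n')) else approx n' m
  else fun=> 0.

Definition sol n := approx n.+1 n.

Lemma approx_sol n m : (m < n)%N -> approx n m = sol m.
Proof.
elim: n => // n IHn; rewrite ltnS leq_eqVlt => /predU1P[-> // | mn] /=.
by rewrite (ltn_eqF mn) IHn.
Qed.

Lemma sol_extends n : extends_at n sol (sol n).
Proof.
elim/ltn_ind: n => n IHn.
have : extends_at n (approx n) (sol n).
  rewrite /sol /= eqxx; apply: epsilon_spec; apply: exists_extends_at => m mn l lm.
  by rewrite (approx_sol mn) (approx_sol (ltn_trans lm mn)); apply: IHn.
by move=> approx_ext l ln; rewrite -(approx_sol ln); apply: approx_ext.
Qed.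

Lemma cocycle_coboundary :
  exists x : nat -> int, forall m n, P m -> P n ->
    (gcdz (c m) (c n) %| x n - x m - b m n)%Z.
Proof.
exists sol => m n Pm Pn; case: (ltngtP m n) => [mn | nm | <-].
- exact: sol_extends.
- have -> : sol n - sol m - b m n =
    - (sol m - sol n - b n m) - (b m n + b n m) by ring.
  by rewrite rpredB ?rpredN ?cocycle_antisym // gcdzC sol_extends.
- by rewrite subrr add0r rpredN (dvdz_trans (dvdz_gcdl _ _)) ?cocycle_diag.
Qed.

End CocycleSolution.

Lemma cong_ideal2E i j u v : cong_ideal2 i j u v <-> (gcdz i j %| u - v)%Z.
Proof. by rewrite /cong_ideal2 -eqz_mod_dvd; split=> /eqP. Qed.

Lemma cong_ideal3E i j k u v :
  cong_ideal3 i j k u v <-> (gcdz (gcdz i j) k %| u - v)%Z.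
Proof. by rewrite /cong_ideal3 -eqz_mod_dvd; split=> /eqP. Qed.

Theorem theorem1 (I : int -> Prop) (a : int -> int -> int) :
  (exists x : int -> int,
     forall i j : int, I i -> I j -> cong_ideal2 i j (x j - x i) (a i j))
  <->
  (forall i j k : int, I i -> I j -> I k ->
     cong_ideal3 i j k (a i j + a j k) (a i k)).
Proof.
split=> [[x x_sol] i j k Ii Ij Ik | a_cocycle].
  by apply/cong_ideal3E/(@coboundary_cocycle _ id x); apply/cong_ideal2E/x_sol.
pose e n : int := odflt 0 (unpickle n).
have eK z : e (pickle z) = z by rewrite /e pickleK.
pose P n : bool := excluded_middle_informative (I (e n)).
have PE n : P n <-> I (e n) by rewrite /P; case: excluded_middle_informative.
have [|x x_sol] := @cocycle_coboundary P e (fun m n => a (e m) (e n)).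
  by move=> i j k /PE Ii /PE Ij /PE Ik; apply/cong_ideal3E/a_cocycle.
have P_pickle z : I z -> P (pickle z) by move=> Iz; apply/PE; rewrite eK.
exists (x \o pickle) => i j Ii Ij; apply/cong_ideal2E.
by have := x_sol _ _ (P_pickle i Ii) (P_pickle j Ij); rewrite !eK.
Qed.
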